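(* Let $\lambda = a + i b$ be a complex eigenvalue (i.e. $b \neq 0$) of $\mathcal{A}\mathcal{P}^{-1}$, with $a$ the real part, $b$ the imaginary part, $i$ the imaginary unit, and $(x; y; z)$ the corresponding eigenvector of the equivalent scaled eigenproblem described in the context. Then, if $0\leq\gamma_{\min}^D<1$, any complex eigenvalue is such that \[ |\lambda-1| \le \sqrt{ 1 - \rho_{\min}}, \qquad \text{where} \quad \rho_{\min} = \frac{\gamma^A_{\min}\|x\|^2 + \gamma_{\min}^D \|y\|^2 + \gamma_{\min}^E \|z\|^2} {\|y\|^2 +\gamma^E_{\min}\|z\|^2}, \] otherwise (if $\gamma_{\min}^D \ge 1$), all eigenvalues are real.
   Context: Consider the double saddle-point matrix $\mathcal{A}=\begin{bmatrix} A & B^{T} & 0\\ B & -D & C^{T}\\ 0 & C & E\end{bmatrix}$ of size $n+m+p$, $n\ge\max\{m,p\}$, where $A\in\mathbb{R}^{n\times n}$ and $E\in\mathbb{R}^{p\times p}$ are symmetric positive definite (SPD), $B\in\mathbb{R}^{m\times n}$ has full row rank, $C\in\mathbb{R}^{p\times m}$ has full rank, and $D\in\mathbb{R}^{m\times m}$ is symmetric positive semidefinite. Let $S=D+BA^{-1}B^T$, $X=E+CS^{-1}C^T$, and let $\widehat A,\widehat S,\widehat X$ be SPD approximations of $A,S,X$. The block triangular preconditioner is $\mathcal{P}=\begin{bmatrix} \widehat A & B^{T} & 0\\ 0 & -\widehat S & C^{T}\\ 0 & 0 & \widehat X\end{bmatrix}$, and $\mathcal{P}_D=\mathrm{blkdiag}(\widehat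 A,\widehat S,\widehat X)$. Set $\widetilde S = D + B\widehat A^{-1}B^T$, $\widetilde X = E + C\widehat S^{-1}C^T$, $\overline A=\widehat A^{-1/2}A\widehat A^{-1/2}$, $\overline D=\widehat S^{-1/2}D\widehat S^{-1/2}$, $\overline E=\widehat X^{-1/2}E\widehat X^{-1/2}$, $R=\widehat S^{-1/2}B\widehat A^{-1/2}$, $K=\widehat X^{-1/2}C\widehat S^{-1/2}$. The eigenvalues of $\mathcal{A}\mathcal{P}^{-1}$ are those of the generalized problem $\mathcal{P}_D^{-1/2}\mathcal{A}\mathcal{P}_D^{-1/2}w=\lambda\mathcal{P}_D^{-1/2}\mathcal{P}\mathcal{P}_D^{-1/2}w$, i.e. $\overline A x - \lambda x = (\lambda-1)R^T y$, $Rx - \overline D y - (\lambda-1)K^T z = -\lambda y$, $Ky + \overline E z = \lambda z$, with $w=(x;y;z)$. Define $\gamma^A_{\min}=\lambda_{\min}(\widehat A^{-1}A)$ (with $\gamma_{\max}^A$ analogous), $\gamma^D_{\min}=\lambda_{\min}(\widehat S^{-1}D)\ge 0$, $\gamma^E_{\min}=\lambda_{\min}(\widehat X^{-1}E)>0$. It is assumed that $1\in[\gamma^A_{\min},\gamma^A_{\max}]$. *)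

From HB Require Import structures.
From mathcomp Require Import all_boot all_order all_algebra.
From mathcomp Require Import complex.
Set Implicit Arguments. Unset Strict Implicit. Unset Printing Implicit Defensive.
Import Order.TTheory GRing.Theory Num.Theory.
Local Open Scope ring_scope.

Section Defs.
Variable R : rcfType.

Definition spd n (M : 'M[R]_n) : Prop :=
  M^T = M /\ forall v : 'cV[R]_n, v != 0 -> 0 < (v^T *m M *m v) 0 0.
Definition spsd n (M : 'M[R]_n) : Prop :=
  M^T = M /\ forall v : 'cV[R]_n, 0 <= (v^T *m M *m v) 0 0.

Definition is_inv_sqrt n (M H : 'M[R]_n) : Prop :=
  spd H /\ H *m H = invmx M.

Definition is_min_eig n (M : 'M[R]_n) (c : R) : Prop :=
  eigenvalue M c /\ forall d, eigenvalue M d -> c <= d.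
Definition is_max_eig n (M : 'M[R]_n) (c : R) : Prop :=
  eigenvalue M c /\ forall d, eigenvalue M d -> d <= c.

Definition toCmx m n (M : 'M[R]_(m, n)) : 'M[R[i]]_(m, n) :=
  map_mx (fun r => r%:C%C) M.

Definition cabs (z : R[i]) : R := ComplexField.Normc.normc z.

Definition cnorm2 n (v : 'cV[R[i]]_n) : R :=
  \sum_(k < n) cabs (v k 0) ^+ 2.
End Defs.

(* Take the inner products of the three scaled eigen-equations with x, y and z.
   The terms x^* R^T y and y^* K^T z are the conjugates of y^* R x and z^* K y,
   so the three scalar equations can be combined to eliminate these cross
   terms; when Im lam <> 0 this yields
     |lam - 1|^2 (|y|^2 + z^* Ebar z) = |y|^2 - x^* Abar x - y^* Dbar y.
   Abar is similar to Ahat^-1 A, so x^* Abar x >= gAmin |x|^2, and likewise for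
   Dbar and Ebar; these Rayleigh bounds turn the identity into the estimate on
   |lam - 1|, and a positive right-hand side forces gDmin < 1. *)

From HB Require Import structures.
From mathcomp Require Import all_boot all_order all_algebra.
From mathcomp Require Import complex spectral sesquilinear.
From mathcomp Require Import ring lra.
Import Order.TTheory GRing.Theory Num.Theory.
Set Implicit Arguments. Unset Strict Implicit. Unset Printing Implicit Defensive.
Local Open Scope ring_scope.

Section HermitianForm.
Variable C : numClosedFieldType.
Local Open Scope sesquilinear_scope.

Definition cdot n (u v : 'cV[C]_n) : C := (u^t* *m v) 0 0.

Lemma cdotDr n (u v w : 'cV[C]_n) : cdot u (v + w) = cdot u v + cdot u w.
Proof. by rewrite /cdot mulmxDr mxE. Qed.

Lemma cdotNr n (u v : 'cV[C]_n) : cdot u (- v) = - cdot u v.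
Proof. by rewrite /cdot mulmxN mxE. Qed.

Lemma cdotBr n (u v w : 'cV[C]_n) : cdot u (v - w) = cdot u v - cdot u w.
Proof. by rewrite cdotDr cdotNr. Qed.

Lemma cdotZr n (u v : 'cV[C]_n) a : cdot u (a *: v) = a * cdot u v.
Proof. by rewrite /cdot -scalemxAr mxE. Qed.

Lemma cdot_mulmxl m n (M : 'M[C]_(m, n)) (u : 'cV[C]_n) (v : 'cV[C]_m) :
  cdot (M *m u) v = cdot u (M^t* *m v).
Proof. by rewrite /cdot trmx_mul map_mxM mulmxA. Qed.

Lemma cdotE n (u v : 'cV[C]_n) : cdot u v = \sum_k (u k 0)^* * v k 0.
Proof. by rewrite /cdot mxE; apply: eq_bigr => k _; rewrite !mxE. Qed.

Lemma conj_cdot n (u v : 'cV[C]_n) : (cdot u v)^* = cdot v u.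
Proof.
rewrite !cdotE rmorph_sum; apply: eq_bigr => k _.
by rewrite rmorphM /= conjCK mulrC.
Qed.

Lemma spectral_diag_eigenvalue n (A : 'M[C]_n) k :
  A \is normalmx -> eigenvalue A (spectral_diag A 0 k).
Proof.
move=> /orthomx_spectralP; set P := spectralmx A => A_eq.
have P_unit : P \in unitmx := spectral_unit A.
apply/eigenvalueP; exists (delta_mx 0 k *m P).
  rewrite [in LHS]A_eq !mulmxA mulmxK // scalemxAl; congr (_ *m _).
  apply/rowP => j; rewrite mul_mx_diag !mxE.
  by rewrite eqxx /=; case: (eqVneq j k) => [->|_]; rewrite ?mul0r ?mulr0 // mulrC.
rewrite mulmx_free_eq0 ?row_free_unit //.
by apply/eqP => /rowP/(_ k)/eqP; rewrite !mxE !eqxx oner_eq0.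
Qed.

Lemma hermitian_cdot_ge n (A : 'M[C]_n) (c : C) (v : 'cV[C]_n) :
  A \is hermsymmx -> (forall d, d \is Num.real -> eigenvalue A d -> c <= d) ->
  c * cdot v v <= cdot v (A *m v).
Proof.
move=> A_herm c_le; have A_normal := hermitian_normalmx A_herm.
have /orthomx_spectralP := A_normal.
set P := spectralmx A; set d := spectral_diag A => A_eq.
have P_unitary : P \is unitarymx := spectral_unitarymx A.
have -> : cdot v v = cdot (P *m v) (P *m v).
  by rewrite cdot_mulmxl mulmxA -invmx_unitary // mulVmx ?spectral_unit // mul1mx.
rewrite A_eq invmx_unitary // -!mulmxA -cdot_mulmxl.
rewrite !cdotE mulr_sumr; apply: ler_sum => k _.
rewrite mul_diag_mx !mxE [leRHS]mulrCA; apply: ler_wpM2r.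
  by rewrite mulrC mul_conjC_ge0.
apply: c_le; last exact: spectral_diag_eigenvalue.
exact: (mxOverP (hermitian_spectral_diag_real A_herm)).
Qed.

End HermitianForm.

Section RealMatrices.
Variable R : rcfType.
Local Notation C := R[i].
Local Open Scope sesquilinear_scope.

Lemma sqr_cabs (z : C) : (cabs z ^+ 2)%:C%C = z^* * z.
Proof.
case: z => a b; rewrite /cabs /= sqr_sqrtr ?addr_ge0 ?sqr_ge0 //.
by apply/eqP; rewrite eq_complex /=; apply/andP; split; apply/eqP; ring.
Qed.

Lemma cdot_self n (v : 'cV[C]_n) : cdot v v = (cnorm2 v)%:C%C.
Proof.
rewrite cdotE /cnorm2 rmorph_sum; apply: eq_bigr => k _.
by rewrite /= sqr_cabs.
Qed.

Lemma cnorm2_ge0 n (v : 'cV[C]_n) : 0 <= cnorm2 v.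
Proof. by apply: sumr_ge0 => k _; rewrite sqr_ge0. Qed.

Lemma cabs0 : cabs (0 : C) = 0.
Proof. by rewrite /cabs /= expr0n addr0 sqrtr0. Qed.

Lemma cabs_ge0 (z : C) : 0 <= cabs z.
Proof. by case: z => a b; apply: sqrtr_ge0. Qed.

Lemma cabs_gt0 (z : C) : (0 < cabs z) = (z != 0).
Proof.
rewrite lt_def cabs_ge0 andbT; congr negb.
by apply/eqP/eqP => [/ComplexField.Normc.eq0_normc|->]; last exact: cabs0.
Qed.

Lemma cnorm2_gt0 n (v : 'cV[C]_n) : (0 < cnorm2 v) = (v != 0).
Proof.
rewrite lt_def cnorm2_ge0 andbT; congr negb; apply/eqP/eqP => [v0|->].
  apply/matrixP => i j; rewrite ord1 mxE.
  have /eqP := psumr_eq0P (fun k _ => sqr_ge0 (cabs (v k 0))) v0 (i := i) isT.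
  by rewrite sqrf_eq0 => /eqP /ComplexField.Normc.eq0_normc.
by rewrite /cnorm2 big1 // => k _; rewrite mxE cabs0 expr0n.
Qed.

Lemma toCmx_trC m n (M : 'M[R]_(m, n)) : (toCmx M)^t* = (toCmx M)^T.
Proof. by apply/matrixP => i j; rewrite !mxE; apply: conjc_real. Qed.

Lemma toCmx_hermitian n (M : 'M[R]_n) : M^T = M -> toCmx M \is hermsymmx.
Proof.
move=> M_sym; apply/is_hermitianmxP; rewrite expr0 scale1r.
by rewrite toCmx_trC /toCmx map_trmx M_sym.
Qed.

Lemma cdot_tr_toCmx m n (N : 'M[R]_(m, n)) (x : 'cV[C]_n) (y : 'cV[C]_m) :
  cdot x ((toCmx N)^T *m y) = (cdot y (toCmx N *m x))^*.
Proof. by rewrite -toCmx_trC -cdot_mulmxl conj_cdot. Qed.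

Definition qform n (M : 'M[R]_n) (v : 'cV[C]_n) : R :=
  complex.Re (cdot v (toCmx M *m v)).

Lemma qformE n (M : 'M[R]_n) (v : 'cV[C]_n) :
  M^T = M -> cdot v (toCmx M *m v) = (qform M v)%:C%C.
Proof.
move=> M_sym; rewrite RRe_real //; apply/CrealP.
by rewrite -cdot_tr_toCmx /toCmx map_trmx M_sym.
Qed.

Lemma eigenvalue_toCmx n (M : 'M[R]_n) (r : R) :
  eigenvalue (toCmx M) r%:C%C = eigenvalue M r.
Proof. exact: (eigenvalue_map (real_complex R)). Qed.

Lemma qform_ge_min_eig n (M : 'M[R]_n) (c : R) (v : 'cV[C]_n) :
  M^T = M -> (forall d, eigenvalue M d -> c <= d) -> c * cnorm2 v <= qform M v.
Proof.
move=> M_sym c_le; rewrite -lecR rmorphM /= -cdot_self -qformE //.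
apply: hermitian_cdot_ge; first exact: toCmx_hermitian.
by move=> d /RRe_real <-; rewrite eigenvalue_toCmx lecR; apply: c_le.
Qed.

Lemma modulus_identity (lam t w : C) (al X de Y ep Z : R) : Im lam != 0 ->
  al%:C%C - lam * X%:C%C = (lam - 1) * t^* ->
  t - de%:C%C - (lam - 1) * w^* = - (lam * Y%:C%C) ->
  w + ep%:C%C = lam * Z%:C%C ->
  cabs (lam - 1) ^+ 2 * (Y + ep) = Y - al - de.
Proof.
(* Write lam = a + i b: the imaginary part of the first equation, divided by
   b != 0, determines X, and the real part then yields the identity. *)
case: lam t w => a b [t1 t2] [w1 w2].
rewrite -complexIm fmorph_eq0 /= => b_neq0.
rewrite /cabs /= sqr_sqrtr ?addr_ge0 ?sqr_ge0 //.
move=> /eqP; rewrite eq_complex /= => /andP[/eqP e1r /eqP e1i].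
move=> /eqP; rewrite eq_complex /= => /andP[/eqP e2r /eqP e2i].
move=> /eqP; rewrite eq_complex /= => /andP[/eqP e3r /eqP e3i].
have w1E : w1 = a * Z - ep by lra.
have w2E : w2 = b * Z by lra.
subst w1 w2.
have t1E : t1 = de + (a - 1) * (a * Z - ep) + b * b * Z - a * Y by lra.
have t2E : t2 = b * (Z - ep - Y) by lra.
subst t1 t2.
have XE : X = (a - 1) * (Z - ep - Y) - (de + (a - 1) * (a * Z - ep) + b * b * Z - a * Y).
  by apply: (mulfI b_neq0); lra.
subst X; lra.
Qed.

Lemma eigen_modulus_identity n m p (Ab : 'M[R]_n) (Rb : 'M[R]_(m, n))
    (Db : 'M[R]_m) (Kb : 'M[R]_(p, m)) (Eb : 'M[R]_p) (lam : C)
    (x : 'cV[C]_n) (y : 'cV[C]_m) (z : 'cV[C]_p) :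
  Ab^T = Ab -> Db^T = Db -> Eb^T = Eb -> Im lam != 0 ->
  toCmx Ab *m x - lam *: x = (lam - 1) *: ((toCmx Rb)^T *m y) ->
  toCmx Rb *m x - toCmx Db *m y - (lam - 1) *: ((toCmx Kb)^T *m z) = - (lam *: y) ->
  toCmx Kb *m y + toCmx Eb *m z = lam *: z ->
  cabs (lam - 1) ^+ 2 * (cnorm2 y + qform Eb z) =
    cnorm2 y - qform Ab x - qform Db y.
Proof.
move=> Ab_sym Db_sym Eb_sym Im_neq0 e1 e2 e3.
apply: (modulus_identity Im_neq0 (t := cdot y (toCmx Rb *m x))
  (w := cdot z (toCmx Kb *m y)) (X := cnorm2 x) (Z := cnorm2 z)).
- move/(congr1 (cdot x)): e1.
  by rewrite cdotBr !cdotZr cdot_self qformE // cdot_tr_toCmx.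
- move/(congr1 (cdot y)): e2.
  by rewrite !cdotBr cdotNr !cdotZr cdot_self qformE // cdot_tr_toCmx.
- move/(congr1 (cdot z)): e3.
  by rewrite cdotDr !cdotZr cdot_self qformE.
Qed.

End RealMatrices.

Section Congruence.
Variable R : rcfType.

Lemma mulmx_trmx_gt0 n (u : 'rV[R]_n) : u != 0 -> 0 < (u *m u^T) 0 0.
Proof.
have sq_ge0 k : 0 <= u 0 k * u^T k 0 by rewrite mxE -expr2 sqr_ge0.
move=> u0; rewrite mxE lt_def sumr_ge0 // andbT.
apply: contra u0 => /eqP u0; apply/eqP/rowP => k.
have /eqP := psumr_eq0P (fun k _ => sq_ge0 k) u0 (i := k) isT.
by rewrite mxE -expr2 sqrf_eq0 mxE => /eqP.
Qed.

Lemma spd_unitmx n (M : 'M[R]_n) : spd M -> M \in unitmx.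
Proof.
case=> _ M_pos; rewrite -row_free_unit -kermx_eq0; apply/rowV0P => v /sub_kermxP vM.
apply/eqP; apply: contraT => v0; have := M_pos v^T; rewrite trmx_eq0 => /(_ v0).
by rewrite trmxK vM mul0mx mxE ltxx.
Qed.

Lemma sym_congr n (H M : 'M[R]_n) :
  H^T = H -> M^T = M -> (H *m M *m H)^T = H *m M *m H.
Proof. by move=> H_sym M_sym; rewrite !trmx_mul H_sym M_sym mulmxA. Qed.

Lemma spd_congr n (H M : 'M[R]_n) : spd M -> spd H -> spd (H *m M *m H).
Proof.
move=> [M_sym M_pos] H_spd; have H_unit := spd_unitmx H_spd.
split=> [|v v0]; first exact: sym_congr H_spd.1 M_sym.
have Hv0 : H *m v != 0.
  by apply: contraNneq v0 => Hv0; rewrite -(mulKmx H_unit v) Hv0 mulmx0.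
by have := M_pos _ Hv0; rewrite trmx_mul H_spd.1 !mulmxA.
Qed.

Lemma spd_eigenvalue_gt0 n (M : 'M[R]_n) d : spd M -> eigenvalue M d -> 0 < d.
Proof.
case=> _ M_pos /eigenvalueP [u uM u0].
have := M_pos u^T; rewrite trmx_eq0 => /(_ u0).
by rewrite trmxK uM -scalemxAl mxE pmulr_lgt0 // mulmx_trmx_gt0.
Qed.

Lemma eigenvalue_mulmxC n (P M : 'M[R]_n) d :
  P \in unitmx -> eigenvalue (P *m M) d = eigenvalue (M *m P) d.
Proof.
move=> P_unit; apply/eigenvalueP/eigenvalueP => -[v vPM v0].
  exists (v *m P); first by rewrite mulmxA -(mulmxA v) vPM scalemxAl.
  by rewrite mulmx_free_eq0 ?row_free_unit.
exists (v *m invmx P); last by rewrite mulmx_free_eq0 ?row_free_unit ?unitmx_inv.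
by rewrite mulmxA mulmxKV // -(mulmxK P_unit (v *m M)) -(mulmxA v) vPM scalemxAl.
Qed.

Lemma inv_sqrt_eigenvalue n (M Mhat H : 'M[R]_n) d : is_inv_sqrt Mhat H ->
  eigenvalue (H *m M *m H) d = eigenvalue (invmx Mhat *m M) d.
Proof. by case=> /spd_unitmx H_unit H2; rewrite -eigenvalue_mulmxC // mulmxA H2. Qed.

Lemma inv_sqrt_min_eig_gt0 n (M Mhat H : 'M[R]_n) c :
  spd M -> is_inv_sqrt Mhat H -> is_min_eig (invmx Mhat *m M) c -> 0 < c.
Proof.
move=> M_spd H_isqrt [c_eig _].
apply: (spd_eigenvalue_gt0 (spd_congr M_spd H_isqrt.1)).
by rewrite (inv_sqrt_eigenvalue _ _ H_isqrt).
Qed.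

Lemma inv_sqrt_qform_ge n (M Mhat H : 'M[R]_n) c v : M^T = M ->
  is_inv_sqrt Mhat H -> is_min_eig (invmx Mhat *m M) c ->
  c * cnorm2 v <= qform (H *m M *m H) v.
Proof.
move=> M_sym H_isqrt [_ c_min].
apply: qform_ge_min_eig => [|d]; first exact: sym_congr H_isqrt.1.1 M_sym.
by rewrite (inv_sqrt_eigenvalue _ _ H_isqrt); apply: c_min.
Qed.

End Congruence.

Lemma modulus_bound (R : realFieldType) (s al de ep X Y Z gA gD gE : R) :
  0 < s -> 0 < gA -> 0 <= gD -> 0 < gE ->
  0 <= X -> 0 <= Y -> 0 <= Z -> 0 < X + Y + Z ->
  gA * X <= al -> gD * Y <= de -> gE * Z <= ep ->
  s * (Y + ep) = Y - al - de ->
  gD < 1 /\ s <= 1 - (gA * X + gD * Y + gE * Z) / (Y + gE * Z).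
Proof.
move=> s_gt0 gA_gt0 gD_ge0 gE_gt0 X_ge0 Y_ge0 Z_ge0 XYZ_gt0 al_ge de_ge ep_ge modulus_eq.
have gAX_ge0 : 0 <= gA * X by rewrite mulr_ge0 // ltW.
have gDY_ge0 : 0 <= gD * Y by rewrite mulr_ge0.
have gEZ_ge0 : 0 <= gE * Z by rewrite mulr_ge0 // ltW.
have Yep_gt0 : 0 < Y + ep.
  rewrite ltNge; apply/negP => Yep_le0.
  have Z0 : Z = 0 by nra.
  have X0 : X = 0 by nra.
  lra.
have lhs_gt0 : 0 < Y - al - de by rewrite -modulus_eq mulr_gt0.
have gD_lt1 : gD < 1 by nra.
have den_gt0 : 0 < Y + gE * Z by nra.
split=> //; rewrite -[1](divff (lt0r_neq0 den_gt0)) -mulrBl ler_pdivlMr //.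
nra.
Qed.

Unset Implicit Arguments.

Theorem theorem1 (R : rcfType) (n m p : nat)
  (A : 'M[R]_n) (B : 'M[R]_(m, n)) (C : 'M[R]_(p, m))
  (D : 'M[R]_m) (E : 'M[R]_p)
  (Ahat : 'M[R]_n) (Shat : 'M[R]_m) (Xhat : 'M[R]_p)
  (Ah Sh Xh : 'M[R]_(_))
  (gAmin gAmax gDmin gEmin : R)
  (lam : R[i]) (x : 'cV[R[i]]_n) (y : 'cV[R[i]]_m) (z : 'cV[R[i]]_p) :
  (maxn m p <= n)%N ->
  spd A -> spd E -> \rank B = m -> \rank C = minn p m -> spsd D ->
  spd Ahat -> spd Shat -> spd Xhat ->
  is_inv_sqrt Ahat Ah -> is_inv_sqrt Shat Sh -> is_inv_sqrt Xhat Xh ->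
  is_min_eig (invmx Ahat *m A) gAmin -> is_max_eig (invmx Ahat *m A) gAmax ->
  is_min_eig (invmx Shat *m D) gDmin -> is_min_eig (invmx Xhat *m E) gEmin ->
  gAmin <= 1 <= gAmax ->
  let Abar := toCmx (Ah *m A *m Ah) in
  let Dbar := toCmx (Sh *m D *m Sh) in
  let Ebar := toCmx (Xh *m E *m Xh) in
  let Rm := toCmx (Sh *m B *m Ah) in
  let Km := toCmx (Xh *m C *m Sh) in
  [|| x != 0, y != 0 | z != 0] ->
  Abar *m x - lam *: x = (lam - 1) *: (Rm^T *m y) ->
  Rm *m x - Dbar *m y - (lam - 1) *: (Km^T *m z) = - (lam *: y) ->
  Km *m y + Ebar *m z = lam *: z ->
  Im lam != 0 ->
  let rho_min := (gAmin * cnorm2 x + gDmin * cnorm2 y + gEmin * cnorm2 z)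
                 / (cnorm2 y + gEmin * cnorm2 z) in
  (0 <= gDmin < 1 -> cabs (lam - 1) <= Num.sqrt (1 - rho_min)) /\
  (1 <= gDmin -> False).
Proof.
move=> _ A_spd E_spd _ _ [D_sym _] _ _ _ Ah_isqrt Sh_isqrt Xh_isqrt
  A_min _ D_min E_min _ Abar Dbar Ebar Rm Km xyz_neq0 e1 e2 e3 Im_neq0 rho_min.
have modulus_eq := eigen_modulus_identity (sym_congr Ah_isqrt.1.1 A_spd.1)
  (sym_congr Sh_isqrt.1.1 D_sym) (sym_congr Xh_isqrt.1.1 E_spd.1) Im_neq0 e1 e2 e3.
have s_gt0 : 0 < cabs (lam - 1) ^+ 2.
  rewrite exprn_gt0 // cabs_gt0 subr_eq0.
  by apply: contraNneq Im_neq0 => ->; apply/eqP/Creal_ImP/real1.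
have xyz_gt0 : 0 < cnorm2 x + cnorm2 y + cnorm2 z.
  have := cnorm2_ge0 x; have := cnorm2_ge0 y; have := cnorm2_ge0 z.
  by case/or3P: xyz_neq0; rewrite -cnorm2_gt0; lra.
have bound gD_ge0 := modulus_bound s_gt0
  (inv_sqrt_min_eig_gt0 A_spd Ah_isqrt A_min) gD_ge0
  (inv_sqrt_min_eig_gt0 E_spd Xh_isqrt E_min)
  (cnorm2_ge0 x) (cnorm2_ge0 y) (cnorm2_ge0 z) xyz_gt0
  (inv_sqrt_qform_ge x A_spd.1 Ah_isqrt A_min) (inv_sqrt_qform_ge y D_sym Sh_isqrt D_min)
  (inv_sqrt_qform_ge z E_spd.1 Xh_isqrt E_min) modulus_eq.
split=> [/andP[gD_ge0 _]|gD_ge1].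
  have [_ le_rho] := bound gD_ge0.
  rewrite -(ger0_norm (cabs_ge0 (lam - 1))) -sqrtr_sqr.
  by rewrite ler_sqrt // (le_trans _ le_rho) // sqr_ge0.
have [] := bound (le_trans ler01 gD_ge1).
by rewrite ltNge gD_ge1.
Qed.
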